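(* Let $\mathbb{S}=(S,\Sigma,\{\tau_a\mid a\in L\})$ be an LMP and let $\Lambda$ be a sub-$\sigma$-algebra of $\Sigma$ such that $\Sigma(\mathcal{R}(\Lambda))=\Lambda$. The following are equivalent: (1) $\Lambda$ is stable; (2) $\mathcal{R}(\Lambda)\subseteq\mathcal{R}^T(\Lambda)$; (3) $\mathcal{R}(\Lambda)$ is a state bisimulation.
   Context: An LMP is a triple $(S,\Sigma,\{\tau_a\mid a\in L\})$ with $(S,\Sigma)$ a measurable space, $L$ countable, and each $\tau_a:S\times\Sigma\to[0,1]$ a Markov kernel (subprobability measure in the second argument, measurable in the first). For $R\subseteq S\times S$, $A$ is $R$-closed if $x\in A$, $xRs$ imply $s\in A$; $\Sigma(R)$ is the family of $R$-closed members of $\Sigma$. For $\Gamma\subseteq\mathcal{P}(S)$, $\mathcal{R}(\Gamma)=\{(s,t):\forall A\in\Gamma\,(s\in A\iff t\in A)\}$; for $\Lambda\subseteq\Sigma$, $\mathcal{R}^T(\Lambda)=\{(s,t):\forall a\in L\,\forall E\in\Lambda\ \tau_a(s,E)=\tau_a(t,E)\}$. A family $\Lambda\subseteq\Sigma$ is stable if for all $A\in\Lambda$, rational $r\in[0,1]$ and $a\in L$, $\{s\in S:\tau_a(s,A)>r\}\in\Lambda$. A state bisimulation is a symmetric relation $R$ on $S$ such that whenever $sRt$ and $C\in\Sigma(R)$, $\tau_a(s,C)=\tau_a(t,C)$ for all $a\in L$. *)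

From HB Require Import structures.
From mathcomp Require Import all_boot all_order all_algebra.
From mathcomp Require Import all_classical all_reals all_analysis.
Set Implicit Arguments. Unset Strict Implicit. Unset Printing Implicit Defensive.
Import Order.TTheory GRing.Theory Num.Theory.
Local Open Scope classical_set_scope.
Local Open Scope ring_scope.

(* An LMP over the measurable space S with countable label set L is a family
   tau : L -> R.-spker S ~> S of Markov (subprobability) kernels. *)
Section LMP.
Context {d : measure_display} {S : measurableType d} {R : realType} {L : countType}.

Definition relR (G : set (set S)) : S -> S -> Prop :=
  fun s t => forall A, G A -> (A s <-> A t).

Definition relRT (tau : L -> R.-spker S ~> S) (Lam : set (set S)) : S -> S -> Prop :=
  fun s t => forall a E, Lam E -> tau a s E = tau a t E.

Definition rel_closed (Rel : S -> S -> Prop) (A : set S) : Prop :=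
  forall x s, A x -> Rel x s -> A s.

Definition SigmaR (Rel : S -> S -> Prop) : set (set S) :=
  [set A | measurable A /\ rel_closed Rel A].

Definition stable (tau : L -> R.-spker S ~> S) (Lam : set (set S)) : Prop :=
  forall A, Lam A -> forall (r : rat) (a : L), 0 <= r <= 1 ->
    Lam [set s | ((ratr r : R)%:E < tau a s A)%E].

Definition state_bisimulation (tau : L -> R.-spker S ~> S) (Rel : S -> S -> Prop) : Prop :=
  (forall s t, Rel s t -> Rel t s) /\
  (forall s t, Rel s t -> forall C, SigmaR Rel C -> forall a, tau a s C = tau a t C).

End LMP.

From HB Require Import structures.
From mathcomp Require Import all_boot all_order all_algebra.
From mathcomp Require Import all_classical all_reals all_analysis.
From mathcomp Require Import measurable_realfun.
Import Order.TTheory GRing.Theory Num.Theory.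
Local Open Scope classical_set_scope.
Local Open Scope ring_scope.

(* (1) => (2): the sets {s | tau_a(s, E) > r}, r rational, lie in Lam when Lam
   is stable, hence cannot separate R(Lam)-related states; a value in [0, 1]
   is determined by its rational strict lower cuts, so tau_a(s, E) = tau_a(t, E).
   (2) => (1): {s | tau_a(s, A) > r} is measurable because tau_a is a kernel,
   and R(Lam)-closed because R(Lam)-related states have equal tau_a(-, A);
   so it lies in Sigma(R(Lam)) = Lam.
   (2) <=> (3): R(Lam) is always symmetric, and its closed measurable sets are
   exactly the members of Lam, so the bisimulation condition is condition (2). *)

Lemma rat_between_unit {R : realType} {x y : R} :
  0 <= x -> y <= 1 -> x < y ->
  exists r : rat, [/\ 0 <= r <= 1, x < ratr r & ratr r < y].
Proof.
move=> x0 y1 xy; have /rat_in_itvoo[q] := xy; rewrite in_itv /= => /andP[xq qy].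
exists q; split => //.
have q0 : (0 : R) <= ratr q by apply: le_trans x0 (ltW xq).
have q1 : (ratr q : R) <= 1 by apply: le_trans (ltW qy) y1.
by rewrite -(ler0q R) q0 -(ler_rat R) rmorph1 q1.
Qed.

Lemma unit_eq_by_rat_cuts {R : realType} (x y : \bar R) :
  (0 <= x <= 1)%E -> (0 <= y <= 1)%E ->
  (forall r : rat, 0 <= r <= 1 ->
     ((ratr r : R)%:E < x)%E <-> ((ratr r : R)%:E < y)%E) ->
  x = y.
Proof.
case: x => [x| |] //; case: y => [y| |] //; rewrite ?lee_fin ?leey ?leNye //.
move=> /andP[x0 x1] /andP[y0 y1] cuts; congr (_%:E).
have [xy|yx|//] := ltgtP x y.
- have [r [r01 xr ry]] := rat_between_unit x0 y1 xy.
  by move: (cuts r r01) => [_]; rewrite !lte_fin => /(_ ry); rewrite ltNge (ltW xr).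
- have [r [r01 xr ry]] := rat_between_unit y0 x1 yx.
  by move: (cuts r r01) => [+ _]; rewrite !lte_fin => /(_ ry); rewrite ltNge (ltW xr).
Qed.

Section LabelledMarkovProcess.
Context {d : measure_display} {S : measurableType d} {R : realType}
  {L : countType}.
Variable tau : L -> R.-spker S ~> S.

Lemma spker_unit (a : L) (s : S) (E : set S) :
  measurable E -> (0 <= tau a s E <= 1)%E.
Proof.
move=> mE; rewrite measure_ge0 /=.
apply: le_trans (sprob_kernel_le1 (tau a) s).
by apply: le_measure; rewrite ?inE.
Qed.

Lemma measurable_superlevel (a : L) (A : set S) (r : R) :
  measurable A -> measurable [set s | (r%:E < tau a s A)%E].
Proof.
move=> mA; rewrite -[X in measurable X]setTI.
have -> : [set s | (r%:E < tau a s A)%E] =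
          (fun s => tau a s A) @^-1` `]r%:E, +oo[%classic.
  by apply/seteqP; split => s /=; rewrite in_itv /= andbT.
exact: (measurable_kernel (tau a) A mA) (emeasurable_itv _).
Qed.

Section Relation.
Variable Lam : set (set S).

Lemma relR_sym (s t : S) : relR Lam s t -> relR Lam t s.
Proof. by move=> st A LA; split => /(st A LA). Qed.

Lemma stable_relR_relRT : Lam `<=` measurable -> stable tau Lam ->
  forall s t, relR Lam s t -> relRT tau Lam s t.
Proof.
move=> Lm Lstable s t st a E LE.
apply: unit_eq_by_rat_cuts; try exact: spker_unit (Lm _ LE).
by move=> r r01; exact: st _ (Lstable E LE r a r01).
Qed.

Lemma relR_relRT_stable : SigmaR (relR Lam) = Lam ->
  (forall s t, relR Lam s t -> relRT tau Lam s t) -> stable tau Lam.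
Proof.
move=> LSigma RT A LA r a _; rewrite -LSigma; split.
  by apply: measurable_superlevel; rewrite -LSigma in LA; case: LA.
by move=> x s /= xr xs; rewrite -(RT x s xs a A LA).
Qed.

Lemma relR_relRT_bisimulation : SigmaR (relR Lam) = Lam ->
  (forall s t, relR Lam s t -> relRT tau Lam s t) <->
  state_bisimulation tau (relR Lam).
Proof.
move=> LSigma; split.
- move=> RT; split; first exact: relR_sym.
  by move=> s t st C; rewrite LSigma => LC a; exact: RT.
- by move=> [_ bisim] s t st a E; rewrite -LSigma => LE; exact: bisim.
Qed.

End Relation.
End LabelledMarkovProcess.

Theorem lemma3p12 (d : measure_display) (S : measurableType d) (R : realType)
  (L : countType) (tau : L -> R.-spker S ~> S) (Lam : set (set S)) :
  sigma_algebra setT Lam -> Lam `<=` measurable ->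
  SigmaR (relR Lam) = Lam ->
  (stable tau Lam <-> (forall s t, relR Lam s t -> relRT tau Lam s t)) /\
  ((forall s t, relR Lam s t -> relRT tau Lam s t) <->
     state_bisimulation tau (relR Lam)).
Proof.
move=> _ Lm LSigma; split; last exact: relR_relRT_bisimulation.
split; [exact: stable_relR_relRT | exact: relR_relRT_stable].
Qed.
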